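(* Let $\mathfrak{G}=(Y,R,E)$ be a descriptive $\mathsf{MS4}$-frame and $Q=E\circ R$. Then (1) $E[\operatorname{qmax}Y]=E_Q[\operatorname{qmax}Y]$; (2) $\mathfrak{G}$ satisfies the global Kuroda principle iff for every $x\in\operatorname{qmax}Y$, $E_Q[x]\subseteq\operatorname{qmax}Y$ (equivalently, $E_Q[\operatorname{qmax}Y]=\operatorname{qmax}Y$).
   Context: A descriptive $\mathsf{MS4}$-frame is $(Y,R,E)$ with $Y$ a Stone space, $R$ a continuous quasi-order, $E$ a continuous equivalence relation (continuous: $R[x]=\{y:xRy\}$ closed for all $x$, $R^{-1}[U]$ clopen for clopen $U$), such that $xEy$, $yRz$ imply $\exists u$ with $xRu$, $uEz$. $x(E\circ R)y$ iff $\exists z$ with $xRz$ and $zEy$. $xE_Qy$ iff $xQy$ and $yQx$. $\operatorname{qmax}Y=\{x: xRy\Rightarrow yRx\}$. For a relation $S$ and set $A$, $S[A]=\{y:\exists a\in A,\ aSy\}$. Global Kuroda principle: for every $x\in\operatorname{qmax}Y$, $E[x]\subseteq\operatorname{qmax}Y$. *)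

From HB Require Import structures.
From mathcomp Require Import all_boot all_order all_algebra.
From mathcomp Require Import all_classical all_reals all_analysis.
Set Implicit Arguments. Unset Strict Implicit. Unset Printing Implicit Defensive.
Local Open Scope classical_set_scope.

Definition rel_img {Y : Type} (S : Y -> Y -> Prop) (A : set Y) : set Y :=
  [set y | exists2 a, A a & S a y].
Definition rel_pt {Y : Type} (S : Y -> Y -> Prop) (x : Y) : set Y := S x.
Definition rel_preimg {Y : Type} (S : Y -> Y -> Prop) (A : set Y) : set Y :=
  [set x | exists2 a, A a & S x a].

Definition rel_comp {Y : Type} (E R : Y -> Y -> Prop) : Y -> Y -> Prop :=
  fun x y => exists z, R x z /\ E z y.

Definition rel_sym_part {Y : Type} (Q : Y -> Y -> Prop) : Y -> Y -> Prop :=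
  fun x y => Q x y /\ Q y x.

Definition quasi_order {Y : Type} (R : Y -> Y -> Prop) :=
  (forall x, R x x) /\ (forall x y z, R x y -> R y z -> R x z).

Definition equivalence_rel {Y : Type} (E : Y -> Y -> Prop) :=
  (forall x, E x x) /\ (forall x y, E x y -> E y x) /\
  (forall x y z, E x y -> E y z -> E x z).

Definition stone_space (Y : topologicalType) :=
  compact [set: Y] /\ hausdorff_space Y /\ zero_dimensional Y.

Definition continuous_rel {Y : topologicalType} (S : Y -> Y -> Prop) :=
  (forall x, closed (rel_pt S x)) /\
  (forall U : set Y, clopen U -> clopen (rel_preimg S U)).

Definition descriptive_MS4_frame {Y : topologicalType}
    (R E : Y -> Y -> Prop) :=
  stone_space Y /\
  quasi_order R /\ continuous_rel R /\
  equivalence_rel E /\ continuous_rel E /\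
  (forall x y z, E x y -> R y z -> exists u, R x u /\ E u z).

Definition qmax {Y : Type} (R : Y -> Y -> Prop) : set Y :=
  [set x | forall y, R x y -> R y x].

Definition global_kuroda {Y : Type} (R E : Y -> Y -> Prop) :=
  forall x, qmax R x -> rel_pt E x `<=` qmax R.

From HB Require Import structures.
From mathcomp Require Import all_boot all_order all_algebra.
From mathcomp Require Import all_classical all_reals all_analysis.
Local Open Scope classical_set_scope.

(* Every E-step is a Q-step in both directions, so E ⊆ E_Q.  Conversely, if x is
   quasi-maximal and x E_Q y, then x R z E y for some z, and z is again
   quasi-maximal because qmax Y is an R-upset; hence E_Q[qmax Y] ⊆ E[qmax Y].
   Both Kuroda conditions are then statements about these equal images, and for
   the reflexive relation E_Q, E_Q[qmax Y] ⊆ qmax Y is the same as equality. *)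

Lemma rel_img_subsetP {Y : Type} (S : Y -> Y -> Prop) (A B : set Y) :
  rel_img S A `<=` B <-> (forall x, A x -> rel_pt S x `<=` B).
Proof.
split=> [SAB x Ax y Sxy | SB y [x Ax Sxy]]; last exact: SB Sxy.
by apply: SAB; exists x.
Qed.

Lemma rel_img_refl_eqP {Y : Type} (S : Y -> Y -> Prop) (A : set Y) :
  (forall x, S x x) -> rel_img S A = A <-> rel_img S A `<=` A.
Proof.
move=> S_refl; split=> [-> // | SAA].
by apply/seteqP; split=> // x Ax; exists x.
Qed.

Section QuasiMaximal.

Context {Y : Type} {R E : Y -> Y -> Prop}.
Hypotheses (R_refl : forall x, R x x)
           (R_trans : forall {x y z}, R x y -> R y z -> R x z)
           (E_sym : forall {x y}, E x y -> E y x).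

Let Q := rel_comp E R.

Lemma qmax_upset {a z} : qmax R a -> R a z -> qmax R z.
Proof.
move=> qa Raz u Rzu.
exact: R_trans (qa u (R_trans Raz Rzu)) Raz.
Qed.

Lemma rel_sym_part_comp_of_E {x y} : E x y -> rel_sym_part Q x y.
Proof. by move=> Exy; split; [exists x | exists y; split; last exact: E_sym]. Qed.

Lemma rel_sym_part_comp_qmax {a y} :
  qmax R a -> rel_sym_part Q a y -> exists2 z, qmax R z & E z y.
Proof. by move=> qa [[z [Raz Ezy]] _]; exists z => //; exact: qmax_upset Raz. Qed.

Lemma rel_img_qmax_sym_part :
  rel_img E (qmax R) = rel_img (rel_sym_part Q) (qmax R).
Proof.
apply/seteqP; split=> y [a qa Hay].
  by exists a => //; exact: rel_sym_part_comp_of_E.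
by have [z qz Ezy] := rel_sym_part_comp_qmax qa Hay; exists z.
Qed.

End QuasiMaximal.

Theorem lemma3p10 (Y : topologicalType) (R E : Y -> Y -> Prop) :
  descriptive_MS4_frame R E ->
  let Q := rel_comp E R in
  rel_img E (qmax R) = rel_img (rel_sym_part Q) (qmax R) /\
  (global_kuroda R E <->
     (forall x, qmax R x -> rel_pt (rel_sym_part Q) x `<=` qmax R)) /\
  ((forall x, qmax R x -> rel_pt (rel_sym_part Q) x `<=` qmax R) <->
     rel_img (rel_sym_part Q) (qmax R) = qmax R).
Proof.
move=> [_ [[R_refl R_trans] [_ [[E_refl [E_sym _]] _]]]] Q.
have img_eq := rel_img_qmax_sym_part R_refl R_trans E_sym.
have Q_refl x : rel_sym_part Q x x :=
  rel_sym_part_comp_of_E R_refl E_sym (E_refl x).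
split; first exact: img_eq.
split.
  by rewrite /global_kuroda -!rel_img_subsetP img_eq.
by rewrite -rel_img_subsetP (rel_img_refl_eqP _ _ Q_refl).
Qed.
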